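(* Let $G$ be a graph, $\ell\ge 1$, and let $B\subseteq V(G)$ be a mixed $(\ell-1)$-leaky forcing set of $G$. Let $L=L_1\cup L_2\cup L_3$ be a set of $k\ge\ell$ leaks, where $L_1$ is the set of vertex leaks, $L_2$ the set of edge leaks and $L_3$ the set of specified leaks in $L$. Then \[|L_1\setminus B^{[\infty]}_L|+|L_2-B^{[\infty]}_L|+|L_3-B^{[\infty]}_L|\le k-\ell,\] where for $S\subseteq V(G)$, $L_2-S=\{xy\in L_2: x\notin S,\ y\notin S\}$ and $L_3-S=\{x\to y\in L_3: x\notin S\}$.
   Context: All graphs are finite, simple and undirected. Zero forcing: a blue vertex $u$ with exactly one white neighbor $w$ may force $w$ (color it blue), written $u\to w$. A vertex leak is a vertex not allowed to perform any force. An edge leak is an edge $xy$ across which no force may be performed (neither $x\to y$ nor $y\to x$). A specified leak is an ordered pair $x\to y$ meaning $x$ (the tail) may not force $y$ (the head). A leak is any of these three kinds. $B$ is a mixed $\ell$-leaky forcing set if for every set of at most $\ell$ leaks (of any mix of kinds), exhaustively applying the forcing rule from initial blue set $B$ subject to all the leaks colors all of $V(G)$ blue. For a set $L$ of leaks, $B^{[\infty]}_L$ denotes the set of blue vertices obtained from $B$ after exhaustively applying the forcing rule subject to the leaks in $L$ (independent of the order of forces). *)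

From mathcomp Require Import all_boot.
Set Implicit Arguments. Unset Strict Implicit. Unset Printing Implicit Defensive.

(* A simple graph: vertex type T : finType, adjacency e : rel T,
   assumed symmetric and irreflexive in the theorem statement. *)

(* Leaks: a vertex leak v, an edge leak given as the unordered pair {x,y}
   (a 2-element set), or a specified leak x -> y given as the ordered pair. *)
Notation leak T := ((T + {set T}) + (T * T))%type.
Definition VL {T : finType} (v : T) : leak T := inl (inl v).
Definition EL {T : finType} (s : {set T}) : leak T := inl (inr s).
Definition SL {T : finType} (p : T * T) : leak T := inr p.

Definition valid_leak (T : finType) (e : rel T) (l : leak T) : bool :=
  match l with
  | inl (inl _) => true
  | inl (inr s) => [exists x, exists y, (s == [set x; y]) && e x y]
  | inr (x, y) => e x y
  end.

Definition valid_leaks (T : finType) (e : rel T) (L : {set leak T}) : bool :=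
  [forall l in L, valid_leak e l].

Definition can_force (T : finType) (e : rel T) (L : {set leak T})
    (X : {set T}) (u w : T) : bool :=
  [&& u \in X, w \notin X, e u w,
      [forall z, (e u z && (z \notin X)) ==> (z == w)],
      VL u \notin L, EL [set u; w] \notin L & SL (u, w) \notin L].

Definition force_step (T : finType) (e : rel T) (L : {set leak T})
    (X : {set T}) : {set T} :=
  X :|: [set w | [exists u, can_force e L X u w]].

(* B^[oo]_L : the set of blue vertices after exhaustively applying the
   forcing rule (the process stabilises after at most #|T| rounds). *)
Definition leaky_closure (T : finType) (e : rel T) (L : {set leak T})
    (B : {set T}) : {set T} :=
  iter #|T| (force_step e L) B.

Definition mixed_leaky_forcing (T : finType) (e : rel T) (l : nat)
    (B : {set T}) : Prop :=
  forall L : {set leak T}, valid_leaks e L -> #|L| <= l ->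
    leaky_closure e L B = [set: T].

From mathcomp Require Import all_boot zify.
Set Implicit Arguments.

(* Let C = B^[oo]_L.  Call a leak inactive for C when it can never obstruct
   a force performed from C: a vertex leak outside C, an edge leak with both
   ends outside C, or a specified leak whose tail lies outside C.  Every
   force has its tail in the current blue set, so removing from L the leaks
   inactive for X does not change which forces are available from X.  Hence
   C, a fixed point of the forcing step under L, is also a fixed point under
   L0 = L minus its inactive leaks, and so B^[oo]_{L0} is contained in C.
   The left-hand side of the lemma counts exactly the inactive leaks of L.
   If it exceeded k - l, then |L0| <= l - 1, so B^[oo]_{L0} = V(G) because B
   is mixed (l-1)-leaky forcing; thus C = V(G), no valid leak is inactive
   for V(G), and the count is 0, a contradiction. *)

Section Closure.
Variables (T : finType) (e : rel T).
Implicit Types (L : {set leak T}) (B X Y : {set T}).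

Lemma force_step_extensive L X : X \subset force_step e L X.
Proof. exact: subsetUl. Qed.

(* The forcing step is monotone: a force available from X whose target is
   not already blue in the larger set Y is still available from Y. *)
Lemma force_step_monotone L X Y :
  X \subset Y -> force_step e L X \subset force_step e L Y.
Proof.
move=> sXY; apply/subsetP => w; rewrite !inE => /orP[wX|].
  by rewrite (subsetP sXY w wX).
case/existsP => u /and3P[uX wX].
case/and5P => euw /forallP unique_white noVL noEL noSL.
case wY: (w \in Y) => //=; apply/existsP; exists u.
rewrite /can_force (subsetP sXY u uX) wY euw noVL noEL noSL /= andbT.
apply/forallP => z; apply/implyP => /andP[euz zY].
have := unique_white z; rewrite euz /=.
by case zX: (z \in X) => //; rewrite (subsetP sXY z zX) in zY.
Qed.

Lemma closure_extensive L B : B \subset leaky_closure e L B.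
Proof.
rewrite /leaky_closure; elim: #|T| => [|n IH] //=.
exact: subset_trans IH (force_step_extensive _ _).
Qed.

(* After #|T| rounds the process has stabilised: each round either is
   already stationary or adds a new vertex, and there are only #|T|. *)
Lemma closure_fixpoint L B :
  force_step e L (leaky_closure e L B) = leaky_closure e L B.
Proof.
set F := force_step e L.
have stable_or_large n : F (iter n F B) = iter n F B \/ n <= #|iter n F B|.
  elim: n => [|n [IH|IH]]; [by right | by left; rewrite /= IH |].
  have [stable|moving] := eqVneq (F (iter n F B)) (iter n F B).
    by left; rewrite /= stable stable.
  right; apply: leq_ltn_trans IH (proper_card _).
  by rewrite properEneq eq_sym moving force_step_extensive.
case: (stable_or_large #|T|) => // large.
have full : iter #|T| F B = [set: T].
  by apply/eqP; rewrite eqEcard subsetT cardsT large.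
rewrite /leaky_closure -/F full; apply/eqP.
by rewrite eqEsubset subsetT force_step_extensive.
Qed.

Lemma closure_least L B X :
  B \subset X -> force_step e L X \subset X -> leaky_closure e L B \subset X.
Proof.
move=> sBX closedX; rewrite /leaky_closure; elim: #|T| => [|n IH] //=.
exact: subset_trans (force_step_monotone L IH) closedX.
Qed.

End Closure.

Section InactiveLeaks.
Variables (T : finType) (e : rel T).
Implicit Types (L : {set leak T}) (C X : {set T}).

Lemma valid_leaks_sub L' L :
  L' \subset L -> valid_leaks e L -> valid_leaks e L'.
Proof.
move=> sub validL; apply/forall_inP => x xL'.
exact: (forall_inP validL x (subsetP sub x xL')).
Qed.

Definition inactive_leak C (x : leak T) : bool :=
  match x with
  | inl (inl v) => v \notin C
  | inl (inr s) => [disjoint s & C]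
  | inr p => p.1 \notin C
  end.

Definition inactive_leaks L C : {set leak T} :=
  [set x in L | inactive_leak C x].

(* Removing the leaks inactive for X does not change the forces available
   from X, since the tail of every such force is blue. *)
Lemma can_force_active L X u w :
  can_force e (L :\: inactive_leaks L X) X u w = can_force e L X u w.
Proof.
rewrite /can_force; case uX: (u \in X) => //=.
have meets : ~~ [disjoint [set u; w] & X].
  by apply/negP => /disjointFr /(_ (set21 u w)); rewrite uX.
by rewrite !inE /= uX (negbTE meets) !andbF.
Qed.

Lemma force_step_active L X :
  force_step e (L :\: inactive_leaks L X) X = force_step e L X.
Proof.
by congr (_ :|: _); apply/setP => w; rewrite !inE; apply: eq_existsb => u;
  rewrite can_force_active.
Qed.

Lemma card_inactive_leaks L C :
  #|[set v : T | (VL v \in L) && (v \notin C)]|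
  + #|[set s : {set T} | (EL s \in L) && [disjoint s & C]]|
  + #|[set p : T * T | (SL p \in L) && (p.1 \notin C)]|
  = #|inactive_leaks L C|.
Proof.
set S1 := [set v | _]; set S2 := [set s | _]; set S3 := [set p | _].
have split_kinds :
    inactive_leaks L C = VL @: S1 :|: EL @: S2 :|: SL @: S3.
  apply/setP => x; apply/idP/idP.
  - case/setIdP; case: x => [[v|s]|p] xL xI;
      by rewrite !inE imset_f ?orbT // inE xL.
  - by case/setUP => [/setUP[]|] /imsetP[y]; rewrite inE => /andP[yL yI] ->;
    rewrite inE yL.
have disjoint_kinds :
    #|VL @: S1 :|: EL @: S2 :|: SL @: S3| = #|S1| + #|S2| + #|S3|.
  rewrite !cardsU !card_imset; try by move=> ? ? [].
  have -> : VL @: S1 :&: EL @: S2 = set0.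
    apply/setP => x; rewrite !inE; apply/negP.
    by case/andP => /imsetP[? _ ->] /imsetP[? _].
  have -> : (VL @: S1 :|: EL @: S2) :&: SL @: S3 = set0.
    apply/setP => x; rewrite !inE; apply/negP.
    by case/andP => /orP[] /imsetP[? _ ->] /imsetP[? _].
  by rewrite !cards0 !subn0.
by rewrite split_kinds disjoint_kinds.
Qed.

(* When every vertex is blue, no leak of the graph is inactive (an edge leak
   is a nonempty set of vertices). *)
Lemma no_inactive_leaks_full L :
  valid_leaks e L -> inactive_leaks L [set: T] = set0.
Proof.
move=> validL; apply/setP => x; rewrite !inE; apply/negP => /andP[xL].
case: x xL => [[v|s]|p] xL /=; rewrite ?inE //.
move/forallP: validL => /(_ (EL s)) /implyP /(_ xL) /existsP[a /existsP[b]].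
by case/andP => /eqP -> _ /disjointFr /(_ (set21 a b)); rewrite inE.
Qed.

End InactiveLeaks.

Theorem lemma4p1 (T : finType) (e : rel T)
    (e_sym : symmetric e) (e_irr : irreflexive e)
    (l : nat) (B : {set T}) (L : {set leak T}) (k : nat) :
  1 <= l ->
  mixed_leaky_forcing e (l - 1) B ->
  valid_leaks e L ->
  #|L| = k ->
  l <= k ->
  let C := leaky_closure e L B in
  #|[set v : T | (VL v \in L) && (v \notin C)]|
  + #|[set s : {set T} | (EL s \in L) && [disjoint s & C]]|
  + #|[set p : T * T | (SL p \in L) && (p.1 \notin C)]|
  <= k - l.
Proof.
move=> l_pos forcingB validL cardL l_le_k /=.
set C := leaky_closure e L B; rewrite card_inactive_leaks.
set I := inactive_leaks L C; set L0 := L :\: I.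
have I_sub_L : I \subset L by apply/subsetP => x /setIdP[].
have card_split : #|I| + #|L0| = k.
  by rewrite -cardL -(cardsID I L) (setIidPr I_sub_L).
rewrite leqNgt; apply/negP => many_inactive.
have validL0 : valid_leaks e L0.
  by apply: valid_leaks_sub validL; exact: subsetDl.
have L0_full : leaky_closure e L0 B = [set: T].
  by apply: forcingB validL0 _; lia.
have C_full : C = [set: T].
  apply/eqP; rewrite eqEsubset subsetT -L0_full closure_least //.
    exact: closure_extensive.
  by rewrite force_step_active closure_fixpoint.
move: many_inactive.
by rewrite /I C_full (no_inactive_leaks_full e L validL) cards0.
Qed.
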